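(* Let $P$, $T_\Sigma$, the lattice points $b_1,\dots,b_{p+3}$ and the coefficients $a_i(q)$ of the mirror curve be as described in the context. Suppose $b_{i_1}$ and $b_{i_2}$ are joined by an edge (1-cell) of $T_\Sigma$ and $b_{i_3}$ is a lattice point of $P$ with $2b_{i_2}=b_{i_1}+b_{i_3}$. Then $\dfrac{a_{i_1}(q)\,a_{i_3}(q)}{a_{i_2}(q)^2}$ is a non-constant monomial of $q$.
   Context: Let $P\subset\mathbb{R}^2$ be a convex lattice polygon with a unimodular triangulation $T_\Sigma$ (every triangle of $T_\Sigma$ has lattice vertices and area $1/2$, and the vertex set of $T_\Sigma$ is $P\cap\mathbb{Z}^2$); this encodes a smooth toric Calabi–Yau 3-fold whose fan has rays generated by $(m,n,1)$, $(m,n)\in P\cap\mathbb{Z}^2$, and 3-cones over the triangles of $T_\Sigma$. Write $P\cap\mathbb{Z}^2=\{b_1,\dots,b_{p+3}\}$, $b_i=(m_i,n_i)$, with $b_1=(1,0)$, $b_2=(0,1)$, $b_3=(0,0)$, where $\sigma_1=\{b_1,b_2,b_3\}$ is a triangle of $T_\Sigma$. Let $L=\ker(\mathbb{Z}^{p+3}\to\mathbb{Z}^3,\ e_i\mapsto(m_i,n_i,1))$ and let $D_i\in L^\vee=\mathrm{Hom}(L,\mathbb{Z})$ be the restriction of the $i$-th coordinate functional. For a triangle $\sigma$ of $T_\Sigma$ let $I'_\sigma$ be the set of indices of its vertices; then $\{D_j:j\notin I'_\sigma\}$ is a basis of $L^\vee\otimes\mathbb{Q}$. Fix $H_1,\dots,H_p\in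 L^\vee\otimes\mathbb{Q}$ (nef classes) such that for every triangle $\sigma$, $H_k=\sum_{j\notin I'_\sigma}s^\sigma_{k,j}D_j$ with all $s^\sigma_{k,j}\in\mathbb{Z}_{\ge0}$ and the $p\times p$ matrix $(s^\sigma_{k,j})$ nondegenerate. For $q=(q_1,\dots,q_p)\in(\mathbb{C}^* )^p$ put $a_i(q)=1$ for $i=1,2,3$ and $a_i(q)=\prod_{k=1}^p q_k^{s^{\sigma_1}_{k,i}}$ for $i\ge4$. The mirror curve is the zero set in $(\mathbb{C}^* )^2$ of $H(X,Y,q)=\sum_{i=1}^{p+3}a_i(q)X^{m_i}Y^{n_i}=1+X+Y+\sum_{i\ge4}a_i(q)X^{m_i}Y^{n_i}$. A non-constant monomial of $q$ means $\prod_k q_k^{e_k}$ with $e_k\in\mathbb{Z}_{\ge0}$ not all zero. *)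

From HB Require Import structures.
From mathcomp Require Import all_boot all_order all_algebra all_field.
Set Implicit Arguments. Unset Strict Implicit. Unset Printing Implicit Defensive.
Import Order.TTheory GRing.Theory Num.Theory.
Local Open Scope ring_scope.

Definition in_hull (N : nat) (b : 'I_N -> int * int) (S : {set 'I_N})
    (x : rat * rat) : Prop :=
  exists w : 'I_N -> rat,
    [/\ forall i, 0 <= w i,
        forall i, i \notin S -> w i = 0,
        \sum_i w i = 1,
        x.1 = \sum_i w i * ((b i).1)%:~R
      & x.2 = \sum_i w i * ((b i).2)%:~R].

Definition int_pt (z : int * int) : rat * rat := (z.1%:~R, z.2%:~R).

Definition det3 (N : nat) (b : 'I_N -> int * int) (i j k : 'I_N) : int :=
  ((b j).1 - (b i).1) * ((b k).2 - (b i).2)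
  - ((b j).2 - (b i).2) * ((b k).1 - (b i).1).

Definition unimodular_triangle (N : nat) (b : 'I_N -> int * int)
    (sigma : {set 'I_N}) : Prop :=
  exists i j k, sigma = [set i; j; k] /\ `|det3 b i j k| = 1.

(* {b_i} = P ∩ Z^2 for the convex lattice polygon P = conv{b_i}, listed
   without repetition *)
Definition lattice_points_of_polygon (N : nat) (b : 'I_N -> int * int) : Prop :=
  injective b /\
  (forall z : int * int, in_hull b setT (int_pt z) -> exists i, b i = z).

Definition unimodular_triangulation (N : nat) (b : 'I_N -> int * int)
    (T : {set {set 'I_N}}) : Prop :=
  [/\ forall sigma, sigma \in T -> unimodular_triangle b sigma,
      forall x, in_hull b setT x -> exists2 sigma, sigma \in T & in_hull b sigma x,
      forall sigma tau x, sigma \in T -> tau \in T ->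
         in_hull b sigma x -> in_hull b tau x -> in_hull b (sigma :&: tau) x
    & forall i, exists2 sigma, sigma \in T & i \in sigma].

(* L = ker(Z^N -> Z^3, e_i |-> (m_i, n_i, 1)) *)
Definition in_L (N : nat) (b : 'I_N -> int * int) (l : 'I_N -> int) : Prop :=
  [/\ \sum_i l i * (b i).1 = 0, \sum_i l i * (b i).2 = 0 & \sum_i l i = 0].

(* Elements of L^vee ⊗ Q are written as sum_i c_i D_i, c : 'I_N -> rat
   (D_i = restriction of the i-th coordinate functional to L).
   Two such expressions are equal iff they agree on L. *)
Definition LdualQ_eq (N : nat) (b : 'I_N -> int * int) (c d : 'I_N -> rat) : Prop :=
  forall l, in_L b l -> \sum_i c i * (l i)%:~R = \sum_i d i * (l i)%:~R.

(* the coefficients of the mirror curve, sigma_1 = {b_1,b_2,b_3} = indices 0,1,2 *)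
Definition mirror_coef (p : nat) (s1 : 'I_p -> 'I_p.+3 -> nat) (i : 'I_p.+3)
    (q : 'I_p -> algC) : algC :=
  if (i < 3)%N then 1 else \prod_(k < p) q k ^+ s1 k i.

(* Since b_{i1} + b_{i3} - 2 b_{i2} = 0, the vector l = e_{i1} + e_{i3} - 2 e_{i2}
   lies in L, and every H_k takes the same value on l whichever basis it is
   expanded in.  In the basis attached to sigma_1 this value is the exponent of
   q_k in a_{i1} a_{i3} / a_{i2}^2.  In the basis attached to a triangle sigma
   containing the edge {b_{i1}, b_{i2}}, the vertex b_{i3} is not in sigma
   (collinear points do not span a unimodular triangle), so the value is the
   single coefficient s^sigma_{k,i3} >= 0.  These coefficients cannot all
   vanish: the columns of (s^sigma_{k,j}) indexed by the four points of
   sigma + {i3} would then be zero, leaving rank at most p - 1. *)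

From HB Require Import structures.
From mathcomp Require Import all_boot all_order all_algebra all_field.
From mathcomp Require Import ring lra zify.
Set Implicit Arguments. Unset Strict Implicit. Unset Printing Implicit Defensive.
Import Order.TTheory GRing.Theory Num.Theory.
Local Open Scope ring_scope.

Definition is_midpoint (y x z : int * int) : Prop :=
  (2 * y.1 = x.1 + z.1) /\ (2 * y.2 = x.2 + z.2).

Lemma midpoint_neq (x y z : int * int) :
  is_midpoint y x z -> x != y -> (x != z) && (y != z).
Proof. by case: x y z => [x1 x2] [y1 y2] [z1 z2] [/= h1 h2]; rewrite !xpair_eqE; lia. Qed.

Section MidpointRelation.

Variables (n : nat) (i1 i2 i3 : 'I_n).

Definition midpoint_relation (j : 'I_n) : int :=
  (j == i1)%:R + (j == i3)%:R - 2 * (j == i2)%:R.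

Lemma sum_mul_eq_nat (R : nzRingType) (a : 'I_n) (f : 'I_n -> R) :
  \sum_j f j * (j == a)%:R = f a.
Proof.
by rewrite (bigD1 a) //= eqxx mulr1 big1 ?addr0 // => j /negbTE ->; rewrite mulr0.
Qed.

Lemma sum_midpoint_relation (R : nzRingType) (f : 'I_n -> R) :
  \sum_j f j * (midpoint_relation j)%:~R = f i1 + f i3 - 2 * f i2.
Proof.
under eq_bigr do rewrite /midpoint_relation intrB intrD intrM !mulrz_nat
  mulrBr mulrDr mulr_natl mulrnAr.
by rewrite sumrB big_split sumrMnl /= !sum_mul_eq_nat mulr_natl.
Qed.

Variable b : 'I_n -> int * int.
Hypothesis midpoint : is_midpoint (b i2) (b i1) (b i3).

Lemma midpoint_relation_in_L : in_L b midpoint_relation.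
Proof.
case: midpoint => h1 h2; split.
- under eq_bigr do rewrite mulrC -[midpoint_relation _]intz.
  by rewrite sum_midpoint_relation h1 subrr.
- under eq_bigr do rewrite mulrC -[midpoint_relation _]intz.
  by rewrite sum_midpoint_relation h2 subrr.
- under eq_bigr do rewrite -[midpoint_relation _]intz -[_%:~R]mul1r.
  by rewrite sum_midpoint_relation; ring.
Qed.

Lemma LdualQ_eq_midpoint (c d : 'I_n -> rat) : LdualQ_eq b c d ->
  c i1 + c i3 - 2 * c i2 = d i1 + d i3 - 2 * d i2.
Proof.
by move/(_ _ midpoint_relation_in_L); rewrite !sum_midpoint_relation.
Qed.

Lemma det3_midpoint u v w :
  u \in [set i1; i2; i3] -> v \in [set i1; i2; i3] -> w \in [set i1; i2; i3] ->
  det3 b u v w = 0.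
Proof.
case: midpoint => h1 h2.
have e1 : (b i3).1 = 2 * (b i2).1 - (b i1).1 by rewrite h1; ring.
have e2 : (b i3).2 = 2 * (b i2).2 - (b i1).2 by rewrite h2; ring.
have in3 x : x \in [set i1; i2; i3] -> [\/ x = i1, x = i2 | x = i3].
  by rewrite !inE => /orP[/orP[]|] /eqP; [constructor 1|constructor 2|constructor 3].
by move=> /in3[]-> /in3[]-> /in3[]->; rewrite /det3 ?e1 ?e2; ring.
Qed.

End MidpointRelation.

Lemma card_set3 (T : finType) (a b c : T) :
  a != b -> a != c -> b != c -> #|[set a; b; c]| = 3%N.
Proof.
move=> hab hac hbc.
have -> : #|[set a; b; c]| = #|[:: a; b; c]| by apply: eq_card => x; rewrite !inE orbA.
by apply/card_uniqP; rewrite /= !inE negb_or hab hac hbc.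
Qed.

Lemma unimodular_triangle_card n (b : 'I_n -> int * int) (sigma : {set 'I_n}) :
  unimodular_triangle b sigma -> #|sigma| = 3%N.
Proof.
case=> [i [j [k [-> hdet]]]].
have det3_eq0 u v w : u = v \/ u = w \/ v = w -> det3 b u v w = 0.
  by case=> [->|[->|->]]; rewrite /det3; ring.
by apply: card_set3; apply/eqP => E; move: hdet; rewrite det3_eq0 ?normr0 //; tauto.
Qed.

Lemma midpoint_notin_unimodular_triangle n (b : 'I_n -> int * int)
    (sigma : {set 'I_n}) (i1 i2 i3 : 'I_n) :
  is_midpoint (b i2) (b i1) (b i3) -> unimodular_triangle b sigma ->
  i1 != i2 -> i1 != i3 -> i2 != i3 -> i1 \in sigma -> i2 \in sigma -> i3 \notin sigma.
Proof.
move=> hmid htri h12 h13 h23 h1 h2; apply/negP => h3.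
have sigmaE : [set i1; i2; i3] = sigma.
  apply/eqP; rewrite eqEcard (unimodular_triangle_card htri) card_set3 // andbT.
  by apply/subsetP => x; rewrite !inE => /orP[/orP[]|] /eqP ->.
case: htri => [i [j [k [sigma3 hdet]]]].
have ijk_in x : x \in [set i; j; k] -> x \in [set i1; i2; i3] by rewrite sigmaE sigma3.
by move: hdet; rewrite (det3_midpoint hmid) ?ijk_in ?normr0 ?inE ?eqxx ?orbT.
Qed.

Lemma mxrank_zero_cols (F : fieldType) m n (M : 'M[F]_(m, n)) (S : {set 'I_n}) :
  (forall j, j \in S -> forall i, M i j = 0) -> (\rank M <= #|~: S|)%N.
Proof.
move=> hS; rewrite -mxrank_tr.
have sub : (M^T <= \sum_(j in ~: S) <<row j M^T>>)%MS.
  apply/row_subP => j; case: (boolP (j \in S)) => hj.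
    have -> : row j M^T = 0 by apply/rowP => i; rewrite !mxE hS.
    exact: sub0mx.
  by apply: (sumsmx_sup j); [rewrite inE | rewrite genmxE].
apply: leq_trans (mxrankS sub) _; rewrite -sum1_card.
apply: (big_ind2 (fun (A : 'M[F]_m) (k : nat) => (\rank A <= k)%N)).
- by rewrite mxrank0.
- move=> A1 k1 A2 k2 h1 h2; apply: leq_trans (mxrank_adds_leqif _ _).1 _.
  exact: leq_add.
- by move=> j _; rewrite genmxE; exact: rank_leq_row.
Qed.

Lemma row_full_rank_nonzero_col (F : fieldType) m n (M : 'M[F]_(m, n))
    (S : {set 'I_n}) :
  \rank M = m -> (n < #|S| + m)%N -> exists2 j, j \in S & exists i, M i j != 0.
Proof.
move=> hrank hS.
suff /exists_inP[j jS /existsP[i Mij]] : [exists j in S, [exists i, M i j != 0]].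
  by exists j => //; exists i.
apply: contraLR hS; rewrite negb_exists_in -leqNgt => /forall_inP M0.
have Mcols j : j \in S -> forall i, M i j = 0.
  by move/M0; rewrite negb_exists => /forallP M0j i; apply/eqP; rewrite -[_ == _]negbK.
by have := mxrank_zero_cols Mcols; have := cardsC S; rewrite hrank card_ord; lia.
Qed.

Definition qmonomial (F : fieldType) p (q : 'I_p -> F) (e : 'I_p -> nat) : F :=
  \prod_k q k ^+ e k.

Lemma qmonomial_neq0 (F : fieldType) p (q : 'I_p -> F) e :
  (forall k, q k != 0) -> qmonomial q e != 0.
Proof. by move=> hq; apply/prodf_neq0 => k _; rewrite expf_neq0. Qed.

Lemma qmonomial_ratio (F : fieldType) p (q : 'I_p -> F) (e1 e2 e3 e : 'I_p -> nat) :
  (forall k, q k != 0) -> (forall k, e1 k + e3 k = e k + 2 * e2 k)%N ->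
  qmonomial q e1 * qmonomial q e3 / qmonomial q e2 ^+ 2 = qmonomial q e.
Proof.
move=> hq he.
have -> : qmonomial q e1 * qmonomial q e3 = qmonomial q e * qmonomial q e2 ^+ 2.
  rewrite /qmonomial -big_split -prodrXl -big_split /=; apply: eq_bigr => k _.
  by rewrite -exprD he exprD (mulnC 2) exprM.
by rewrite mulfK // expf_neq0 // qmonomial_neq0.
Qed.

Lemma mirror_coefE p (s1 : 'I_p -> 'I_p.+3 -> nat) (i : 'I_p.+3) (q : 'I_p -> algC) :
  mirror_coef s1 i q =
  qmonomial q (fun k => if i \in [set ord0; inord 1; inord 2] then 0%N else s1 k i).
Proof.
have -> : (i \in [set ord0; inord 1; inord 2]) = (i < 3)%N.
  by rewrite !inE -!val_eqE /= !inordK //; case: i => [[|[|[|?]]] ?].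
rewrite /mirror_coef /qmonomial; case: ifP => // _.
by rewrite big1 // => k; rewrite expr0.
Qed.

Theorem proposition2p5p3
  (p : nat) (b : 'I_p.+3 -> int * int) (T : {set {set 'I_p.+3}})
  (H : 'I_p -> 'I_p.+3 -> rat)
  (s : {set 'I_p.+3} -> 'I_p -> 'I_p.+3 -> nat)
  (hP : lattice_points_of_polygon b)
  (hT : unimodular_triangulation b T)
  (hb1 : b ord0 = (1, 0)) (hb2 : b (inord 1) = (0, 1)) (hb3 : b (inord 2) = (0, 0))
  (hsigma1 : [set ord0; inord 1; inord 2] \in T)
  (hs : forall sigma, sigma \in T -> forall k : 'I_p,
          LdualQ_eq b (H k)
            (fun j => if j \in sigma then 0 else (s sigma k j)%:R))
  (hnd : forall sigma, sigma \in T ->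
          \rank (\matrix_(k < p, j < p.+3)
                   (if j \in sigma then 0 else (s sigma k j)%:R : rat)) = p)
  (i1 i2 i3 : 'I_p.+3)
  (hedge : exists2 sigma, sigma \in T & [/\ i1 != i2, i1 \in sigma & i2 \in sigma])
  (hmid : (2 * (b i2).1 = (b i1).1 + (b i3).1) /\ (2 * (b i2).2 = (b i1).2 + (b i3).2)) :
  exists e : 'I_p -> nat,
    (exists k, e k != 0%N) /\
    forall q : 'I_p -> algC, (forall k, q k != 0) ->
      mirror_coef (s [set ord0; inord 1; inord 2]) i1 q
        * mirror_coef (s [set ord0; inord 1; inord 2]) i3 q
        / (mirror_coef (s [set ord0; inord 1; inord 2]) i2 q) ^+ 2
      = \prod_(k < p) q k ^+ e k.
Proof.
set S1 := [set ord0; inord 1; inord 2].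
case: hedge => sigma hsigma [h12 h1 h2]; case: hP => binj _; case: hT => htri _ _ _.
have h3 : i3 \notin sigma.
  have b12 : b i1 != b i2 by rewrite (inj_eq binj).
  have /andP[b13 b23] := midpoint_neq hmid b12.
  apply: (midpoint_notin_unimodular_triangle hmid (htri _ hsigma)) => //.
    by apply: contra_neq b13 => ->.
  by apply: contra_neq b23 => ->.
exists (fun k => s sigma k i3); split.
  have [|j] := row_full_rank_nonzero_col (S := i3 |: sigma) (hnd _ hsigma).
    by rewrite cardsU1 h3 (unimodular_triangle_card (htri _ hsigma)); lia.
  case/setU1P=> [->|jsigma] [k]; rewrite mxE ?jsigma ?eqxx //.
  by rewrite (negbTE h3) pnatr_eq0; exists k.
move=> q hq; rewrite !mirror_coefE; apply: qmonomial_ratio => // k.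
pose t j := if j \in S1 then 0%N else s S1 k j.
change (t i1 + t i3 = s sigma k i3 + 2 * t i2)%N.
have t_natr j : (if j \in S1 then 0 else (s S1 k j)%:R : rat) = (t j)%:R.
  by rewrite /t; case: ifP.
have := LdualQ_eq_midpoint hmid (hs _ hsigma k).
rewrite (LdualQ_eq_midpoint hmid (hs _ hsigma1 k)) h1 h2 (negbTE h3) !t_natr => E.
by apply/eqP; rewrite -(eqr_nat rat) natrD natrD natrM; apply/eqP; lra.
Qed.
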